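(* Consider the discrete-time per-UE credit recursion described in the context, under either debit rule (CBS-DT or CBS-PU). Then: (i) (Bounded credit) for every UE $u$ and every slot $n\ge 0$, $C_u[n]\in[lo_u,hi_u]$; (ii) (Deterministic deficit recovery) if $C_u[k]<0$ for some slot $k$ and no new transmission grant is issued to $u$ in slots $k,k+1,\dots$, then $C_u$ reaches a non-negative value after finitely many slots. Specifically, the recovery time from the worst-case deficit $lo_u$, assuming no grants are issued, is the deterministic value $T^{\mathrm{rec}}_{\max}=\left\lceil -lo_u/\Delta C_u\right\rceil\cdot T_{\mathrm{slot}}$, and this value is tight.
   Context: Time is slotted: slots $n\in\mathbb{Z}_{\ge0}$ have duration $T_{\mathrm{slot}}>0$. A base station serves a finite set of UEs $\{1,\dots,U\}$. For each UE $u$: $Q_u[n]\in\mathbb{Z}_{\ge0}$ is its downlink backlog (bytes) at the start of slot $n$; $G_u[n]\in\{0,1\}$ indicates whether $u$ receives a new (non-retransmission) grant in slot $n$, with transport block size $\mathrm{TBS}_u[n]\ge 0$ bytes. Each UE has a per-slot credit allowance $\Delta C_u=\texttt{idleSlope}_{p(u)}\cdot T_{\mathrm{slot}}>0$ (bytes) and credit bounds $lo_u<0<hi_u$. Define $f(C,\Delta C,Q)=\min(C+\Delta C,0)$ if $C<0$; $f(C,\Delta C,Q)=0$ if $C>0$ and $Q=0$; $f(C,\Delta C,Q)=C+\Delta C$ otherwise. The credit evolves as $C_u[n+1]=\min\{\max\{f(C_u[n],\Delta C_u,Q_u[n])-D_u[n],\,lo_u\},\,hi_u\}$, starting from some $C_u[0]\in[lo_u,hi_u]$,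 where the debit is $D_u[n]=0$ if $G_u[n]=0$, and otherwise $D_u[n]=\mathrm{TBS}_u[n]$ (variant CBS-DT) or $D_u[n]=\min\{\mathrm{TBS}_u[n],Q_u[n]\}$ (variant CBS-PU). A UE is eligible for a new grant in slot $n$ only if (besides MAC conditions: $Q_u[n]>0$, a free HARQ process, not scheduled for HARQ retransmission in slot $n$) $C_u[n]\ge 0$. *)

From HB Require Import structures.
From mathcomp Require Import all_boot all_order all_algebra.
From mathcomp Require Import reals.
Set Implicit Arguments. Unset Strict Implicit. Unset Printing Implicit Defensive.
Import Order.TTheory GRing.Theory Num.Theory.
Local Open Scope ring_scope.

Inductive cbs_variant := CBS_DT | CBS_PU.

Section Credit.
Variable R : realType.

Definition fcred (C dC : R) (Q : nat) : R :=
  if C < 0 then Num.min (C + dC) 0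
  else if (0 < C) && (Q == 0%N) then 0
  else C + dC.

Definition debit (v : cbs_variant) (G : bool) (TBS : R) (Q : nat) : R :=
  if G then (match v with CBS_DT => TBS | CBS_PU => Num.min TBS Q%:R end)
  else 0.

(* C[n] for one UE, given the initial credit C0, the allowance dC, the
   bounds lo, hi, the backlog Q[.], the new-grant indicator G[.] and TBS[.]. *)
Fixpoint credit (v : cbs_variant) (dC lo hi C0 : R) (Q : nat -> nat)
  (G : nat -> bool) (TBS : nat -> R) (n : nat) : R :=
  match n with
  | 0 => C0
  | n'.+1 =>
      let C := credit v dC lo hi C0 Q G TBS n' in
      Num.min (Num.max (fcred C dC (Q n') - debit v (G n') (TBS n') (Q n')) lo) hi
  end.
End Credit.

(* While the credit is negative and no grant is issued, each slot adds exactly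
   [dC] (capped at 0), so from a deficit [c] the credit stays negative for
   exactly ceil(-c/dC) slots; once non-negative, it stays non-negative without
   grants. *)
From HB Require Import structures.
From mathcomp Require Import all_boot all_order all_algebra.
From mathcomp Require Import reals.
Import Order.TTheory GRing.Theory Num.Theory.
Local Open Scope ring_scope.

Lemma clamp_id (R : realDomainType) (lo hi x : R) :
  lo <= x <= hi -> Num.min (Num.max x lo) hi = x.
Proof. by case/andP=> lo_x x_hi; rewrite (max_idPl lo_x) (min_idPl x_hi). Qed.

Lemma clamp_bounds (R : realDomainType) (lo hi x : R) :
  lo <= hi -> lo <= Num.min (Num.max x lo) hi <= hi.
Proof. by move=> lo_hi; rewrite le_min le_max lexx orbT lo_hi ge_min lexx orbT. Qed.

Section RecoverySlots.
Context {R : realType} (dC : R).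
Hypothesis dC_gt0 : 0 < dC.

Definition recovery_slots (c : R) : nat := `|Num.ceil (- c / dC)|%N.

Lemma recovery_slots_ceil_ge0 (c : R) : c <= 0 -> 0 <= Num.ceil (- c / dC).
Proof.
move=> c_le0; rewrite ceil_ge0 (lt_le_trans (ltrN10 R)) //.
by rewrite divr_ge0 ?oppr_ge0 // ltW.
Qed.

Lemma recovery_slotsE (c : R) :
  c <= 0 -> (recovery_slots c)%:R = (Num.ceil (- c / dC))%:~R :> R.
Proof. by move=> /recovery_slots_ceil_ge0 ceil_ge0; rewrite natr_absz ger0_norm. Qed.

Lemma ltn_recovery_slots (c : R) (m : nat) :
  c <= 0 -> (m < recovery_slots c)%N = (c + m%:R * dC < 0).
Proof.
move=> /recovery_slots_ceil_ge0 ceil_ge0.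
rewrite -ltz_nat gez0_abs // ceil_gt_int ltr_pdivlMr //.
by rewrite -subr_lt0 opprK addrC.
Qed.

Lemma recovery_slots_le (lo c : R) :
  lo <= c -> c <= 0 -> (recovery_slots c <= recovery_slots lo)%N.
Proof.
move=> lo_c c_le0; rewrite leqNgt ltn_recovery_slots // -leNgt.
have := ltnn (recovery_slots lo); rewrite ltn_recovery_slots ?(le_trans lo_c) //.
by move=> /negbT; rewrite -leNgt => /le_trans; apply; rewrite lerD2r.
Qed.

End RecoverySlots.

Section Credit.
Context {R : realType} {v : cbs_variant} {dC lo hi C0 : R} {Q : nat -> nat}
  {G : nat -> bool} {TBS : nat -> R}.
Hypotheses (dC_gt0 : 0 < dC) (hi_ge0 : 0 <= hi) (C0_bounds : lo <= C0 <= hi).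

Local Notation C := (credit v dC lo hi C0 Q G TBS).

Lemma credit_bounds n : lo <= C n <= hi.
Proof.
case: n => [|n] //=; apply: clamp_bounds.
by case/andP: C0_bounds; apply: le_trans.
Qed.

Lemma credit_no_grant_step n :
  G n = false -> C n.+1 = Num.min (Num.max (fcred (C n) dC (Q n)) lo) hi.
Proof. by move=> Gn; rewrite /= /debit Gn subr0. Qed.

Lemma credit_step_neg n :
  G n = false -> C n < 0 -> C n.+1 = Num.min (C n + dC) 0.
Proof.
move=> Gn Cn_lt0; rewrite credit_no_grant_step // /fcred Cn_lt0 clamp_id //.
case/andP: (credit_bounds n) => lo_Cn _.
rewrite ge_min hi_ge0 orbT andbT le_min (le_trans lo_Cn (ltW Cn_lt0)) andbT.
by rewrite (le_trans lo_Cn) // lerDl ltW.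
Qed.

Lemma credit_step_ge0 n : G n = false -> 0 <= C n -> 0 <= C n.+1.
Proof.
move=> Gn Cn_ge0; have fcred_ge0 : 0 <= fcred (C n) dC (Q n).
  by rewrite /fcred ltNge Cn_ge0 /=; case: ifP => // _; rewrite addr_ge0 // ltW.
by rewrite credit_no_grant_step // le_min hi_ge0 le_max fcred_ge0.
Qed.

Section NoGrant.
Variable k : nat.
Hypothesis no_grant : forall j, (k <= j)%N -> G j = false.

Lemma credit_no_grant m :
  if C k + m%:R * dC < 0 then C (k + m) = C k + m%:R * dC else 0 <= C (k + m).
Proof.
elim: m => [|m IHm]; first by rewrite mul0r addr0 addn0; case: ltP.
have Gkm : G (k + m) = false by rewrite no_grant ?leq_addr.
rewrite addnS mulrSr mulrDl mul1r addrA.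
case: ifP IHm => [sum_lt0 Ckm | sum_nlt0 Ckm_ge0]; last first.
  have sum_ge0 : 0 <= C k + m%:R * dC + dC.
    by rewrite addr_ge0 ?(ltW dC_gt0) // leNgt sum_nlt0.
  by rewrite ltNge sum_ge0 /= credit_step_ge0.
by rewrite credit_step_neg ?Ckm //; case: ltP.
Qed.

Lemma credit_lt0_recovery_slots m :
  C k <= 0 -> (C (k + m) < 0) = (m < recovery_slots dC (C k))%N.
Proof.
move=> Ck_le0; rewrite ltn_recovery_slots //.
case: ltP (credit_no_grant m) => [sum_lt0 -> // | _ Ckm_ge0].
by rewrite ltNge Ckm_ge0.
Qed.

End NoGrant.
End Credit.

Theorem mainTheorem1 (R : realType) (v : cbs_variant) (Tslot : R) (U : nat)
  (P : Type) (p : 'I_U -> P) (idleSlope : P -> R)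
  (lo hi C0 : 'I_U -> R) (Q : 'I_U -> nat -> nat) (G : 'I_U -> nat -> bool)
  (TBS : 'I_U -> nat -> R) :
  let dC u := idleSlope (p u) * Tslot in
  let C u n := credit v (dC u) (lo u) (hi u) (C0 u) (Q u) (G u) (TBS u) n in
  0 < Tslot ->
  (forall u, 0 < dC u) ->
  (forall u, lo u < 0 < hi u) ->
  (forall u, lo u <= C0 u <= hi u) ->
  (forall u n, 0 <= TBS u n) ->
  (* eligibility: a new grant is only issued when Q > 0 and C >= 0 *)
  (forall u n, G u n -> (0 < Q u n)%N /\ 0 <= C u n) ->
  (* (i) bounded credit *)
  (forall u n, lo u <= C u n <= hi u) /\
  (* (ii) deficit recovery in finitely many slots without grants *)
  (forall u k, C u k < 0 -> (forall j, (k <= j)%N -> G u j = false) ->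
     exists m, 0 <= C u (k + m)%N) /\
  (* recovery time from any deficit is at most ceil(-lo/dC) slots *)
  (forall u k, C u k < 0 -> (forall j, (k <= j)%N -> G u j = false) ->
     exists m, 0 <= C u (k + m)%N /\
       m%:R * Tslot <= (Num.ceil (- lo u / dC u))%:~R * Tslot) /\
  (* from the worst-case deficit lo, the recovery time is exactly
     ceil(-lo/dC) * Tslot (tightness) *)
  (forall u k, C u k = lo u -> (forall j, (k <= j)%N -> G u j = false) ->
     exists mrec : nat,
       0 <= C u (k + mrec)%N /\
       (forall m, (m < mrec)%N -> C u (k + m)%N < 0) /\
       mrec%:R * Tslot = (Num.ceil (- lo u / dC u))%:~R * Tslot).
Proof.
move=> dC C Tslot_gt0 dC_gt0 lo_hi C0_bounds _ _.
have lo_lt0 u : lo u < 0 by case/andP: (lo_hi u).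
have hi_ge0 u : 0 <= hi u by case/andP: (lo_hi u) => _ /ltW.
have bounds u n : lo u <= C u n <= hi u := credit_bounds (C0_bounds u) n.
have lt0E u k m : (forall j, (k <= j)%N -> G u j = false) -> C u k <= 0 ->
    (C u (k + m)%N < 0) = (m < recovery_slots (dC u) (C u k))%N.
  move=> no_grant.
  exact: credit_lt0_recovery_slots (dC_gt0 u) (hi_ge0 u) (C0_bounds u) k no_grant m.
have recovery u k : C u k < 0 -> (forall j, (k <= j)%N -> G u j = false) ->
    exists m, 0 <= C u (k + m)%N /\
      m%:R * Tslot <= (Num.ceil (- lo u / dC u))%:~R * Tslot.
  move=> /ltW Ck_le0 no_grant; exists (recovery_slots (dC u) (C u k)).
  rewrite leNgt lt0E // ltnn; split=> //.
  apply: ler_wpM2r; first exact: ltW.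
  rewrite -(@recovery_slotsE _ _ (dC_gt0 u) _ (ltW (lo_lt0 u))) ler_nat.
  by rewrite recovery_slots_le //; case/andP: (bounds u k).
split; first exact: bounds.
split.
  move=> u k /recovery recovers /recovers [m [Ckm_ge0 _]].
  by exists m.
split; first exact: recovery.
move=> u k Ck_lo no_grant.
have Ck_le0 : C u k <= 0 by rewrite Ck_lo ltW.
exists (recovery_slots (dC u) (lo u)).
rewrite -(@recovery_slotsE _ _ (dC_gt0 u) _ (ltW (lo_lt0 u))).
rewrite leNgt lt0E // Ck_lo ltnn; split=> //; split=> // m.
by rewrite lt0E // Ck_lo.
Qed.
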